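(* Let $K$ be an algebraically closed field of characteristic zero, $\Phi=(f_1,\dots,f_n)$ a polynomial automorphism of $K^n$ with jacobian $\lambda\in K^*$, and $\Phi^{-1}=(g_1,\dots,g_n)$. For $i=1,\dots,n$ define derivations $\delta_i(P)=\lambda^{-1}\frac{\partial P}{\partial x_i}$ and $\Delta_i(P)=\mathrm{j}(g_1,\dots,g_{i-1},P,g_{i+1},\dots,g_n)$ on $K[x_1,\dots,x_n]$. Then for every $i$ and every $P$, $\Delta_i(P\circ\Phi^{-1})=\delta_i(P)\circ\Phi^{-1}$ and $\Delta_i(P)\circ\Phi=\delta_i(P\circ\Phi)$. Moreover every $\Delta_i$ is locally nilpotent.
   Context: $\mathrm{j}(P_1,\dots,P_n)=\det(\partial P_i/\partial x_j)_{1\le i,j\le n}$ is the jacobian determinant. *)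

From HB Require Import structures.
From mathcomp Require Import all_boot all_order all_algebra all_field.
From mathcomp Require Import mpoly.
Set Implicit Arguments. Unset Strict Implicit. Unset Printing Implicit Defensive.
Import GRing.Theory.
Local Open Scope ring_scope.

Definition jacobian_mx (R : comNzRingType) (n : nat) (f : n.-tuple {mpoly R[n]})
  : 'M[{mpoly R[n]}]_n :=
  \matrix_(i < n, j < n) (tnth f i)^`M(j).

Definition jac (R : comNzRingType) (n : nat) (f : n.-tuple {mpoly R[n]})
  : {mpoly R[n]} := \det (jacobian_mx f).

Definition replace_at (R : comNzRingType) (n : nat) (g : n.-tuple {mpoly R[n]})
  (i : 'I_n) (P : {mpoly R[n]}) : n.-tuple {mpoly R[n]} :=
  [tuple if k == i then P else tnth g k | k < n].

Definition Delta (R : comNzRingType) (n : nat) (g : n.-tuple {mpoly R[n]})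
  (i : 'I_n) (P : {mpoly R[n]}) : {mpoly R[n]} :=
  jac (replace_at g i P).

Definition delta (R : fieldType) (n : nat) (lambda : R) (i : 'I_n)
  (P : {mpoly R[n]}) : {mpoly R[n]} :=
  lambda^-1 *: P^`M(i).

Definition poly_inverse (R : comNzRingType) (n : nat)
  (f g : n.-tuple {mpoly R[n]}) : Prop :=
  (forall i : 'I_n, tnth f i \mPo g = 'X_i) /\
  (forall i : 'I_n, tnth g i \mPo f = 'X_i).

Definition locally_nilpotent (T : nmodType) (D : T -> T) : Prop :=
  forall P : T, exists m : nat, iter m D P = 0.

(* The jacobian chain rule applied to Phi o Phi^-1 = id gives j(g) = lambda^-1.
   By the chain rule, row i of the jacobian matrix of
   (g_1, ..., P o g, ..., g_n) is the combination sum_l (d_l P o g) * (row l of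
   J(g)), so expanding its determinant along row i (Cramer's rule) gives
   Delta_i(P o g) = (d_i P o g) * j(g) = delta_i(P) o g.  Composing with Phi gives
   the second identity, and it shows that Delta_i is conjugate to delta_i, which
   is locally nilpotent because d_i lowers the degree in x_i. *)

From HB Require Import structures.
From mathcomp Require Import all_boot all_order all_algebra all_field.
From mathcomp Require Import mpoly.
Set Implicit Arguments. Unset Strict Implicit. Unset Printing Implicit Defensive.
Import GRing.Theory.
Local Open Scope ring_scope.

Section MPolyCalculus.
Variables (R : comNzRingType) (n : nat).

Lemma mpoly_ring_ind (S : {mpoly R[n]} -> Prop) :
  (forall c, S c%:MP) -> (forall i, S 'X_i) ->
  (forall p q, S p -> S q -> S (p + q)) ->
  (forall p q, S p -> S q -> S (p * q)) -> forall p, S p.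
Proof.
move=> SC SX SD SM p; rewrite (mpolyE p).
apply: (big_ind S); [by rewrite -mpolyC0 | exact: SD |] => m _.
rewrite -mul_mpolyC; apply: (SM) => //.
rewrite mpolyXE_id; apply: (big_ind S); [by rewrite -mpolyC1 | exact: SM |].
move=> i _; elim: (m i) => [|k IHk]; first by rewrite expr0 -mpolyC1.
by rewrite exprS; apply: (SM).
Qed.

Lemma mderivXU (i l : 'I_n) : ('X_i : {mpoly R[n]})^`M(l) = (i == l)%:R.
Proof.
rewrite mderivX mnm1E; case: eqP => [->|_]; last by rewrite scale0r.
have -> : (U_(l) - U_(l) = 0)%MM by apply/mnmP => j; rewrite mnmBE subnn mnm0E.
by rewrite mpolyX0 scale1r.
Qed.

Lemma mderiv_comp_mpoly k (lq : n.-tuple {mpoly R[k]}) (j : 'I_k) p :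
  (p \mPo lq)^`M(j) = \sum_(l < n) (p^`M(l) \mPo lq) * (tnth lq l)^`M(j).
Proof.
elim/mpoly_ring_ind: p.
- move=> c; rewrite comp_mpolyC mderivC; apply/esym/big1 => l _.
  by rewrite mderivC comp_mpoly0 mul0r.
- move=> i; rewrite comp_mpolyXU -tnth_nth (bigD1 i) //= big1 ?addr0.
    by rewrite mderivXU eqxx comp_mpoly1 mul1r.
  by move=> l /negbTE il; rewrite mderivXU eq_sym il comp_mpoly0 mul0r.
- move=> p q IHp IHq; rewrite comp_mpolyD mderivD IHp IHq -big_split /=.
  by apply: eq_bigr => l _; rewrite mderivD comp_mpolyD mulrDl.
- move=> p q IHp IHq.
  rewrite rmorphM /= mderivM IHp IHq mulr_suml mulr_sumr -big_split /=.
  apply: eq_bigr => l _; rewrite mderivM comp_mpolyD !rmorphM /= mulrDl.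
  by congr (_ + _); rewrite -!mulrA; congr (_ * _); apply: mulrC.
Qed.

Lemma comp_mpolyA k r (lq : n.-tuple {mpoly R[k]}) (lr : k.-tuple {mpoly R[r]}) p :
  (p \mPo lq) \mPo lr = p \mPo [tuple tnth lq i \mPo lr | i < n].
Proof.
elim/mpoly_ring_ind: p.
- by move=> c; rewrite !comp_mpolyC.
- by move=> i; rewrite !comp_mpolyXU -!tnth_nth tnth_mktuple.
- by move=> p q IHp IHq; rewrite !comp_mpolyD IHp IHq.
- by move=> p q IHp IHq; rewrite !rmorphM /= IHp IHq.
Qed.

Lemma comp_mpolyK (f g : n.-tuple {mpoly R[n]}) :
  (forall i, tnth f i \mPo g = 'X_i) -> cancel (comp_mpoly f) (comp_mpoly g).
Proof.
move=> fg Q; rewrite comp_mpolyA -[RHS]comp_mpoly_id; congr (Q \mPo _).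
by apply: eq_mktuple => i; apply: fg.
Qed.

Lemma iter_mderiv_msize (i : 'I_n) (p : {mpoly R[n]}) :
  iter (msize p) (mderiv i) p = 0.
Proof.
rewrite -mderivn_iter mderivnE big_seq big1 // => m supp_m.
rewrite ffact_small ?mul0r ?scale0r //.
apply: leq_ltn_trans (msize_mdeg_lt supp_m).
by rewrite mdegE (bigD1 i) //= leq_addr.
Qed.

End MPolyCalculus.

Section DetRowLinComb.
Variables (R : comNzRingType) (n : nat).

Lemma cofactor_eq_off_row (A B : 'M[R]_n) i j :
  (forall r c, r != i -> B r c = A r c) -> cofactor B i j = cofactor A i j.
Proof.
move=> BA; rewrite /cofactor; congr (_ * \det _).
by apply/matrixP => k l; rewrite !mxE; apply: BA; rewrite eq_sym neq_lift.
Qed.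

(* Expand along row i: the contributions of the rows l != i vanish since A adj A = det A. *)
Lemma det_row_lincomb (A B : 'M[R]_n) i (cc : 'I_n -> R) :
  (forall r c, r != i -> B r c = A r c) ->
  (forall c, B i c = \sum_l cc l * A l c) -> \det B = cc i * \det A.
Proof.
move=> BA Bi; rewrite (expand_det_row B i).
transitivity (\sum_j \sum_l cc l * (A l j * cofactor A i j)).
  apply: eq_bigr => j _; rewrite Bi (cofactor_eq_off_row _ BA) mulr_suml.
  by apply: eq_bigr => l _; rewrite mulrA.
rewrite exchange_big /=.
transitivity (\sum_l cc l * (A *m \adj A) l i).
  apply: eq_bigr => l _; rewrite -mulr_sumr mxE; congr (_ * _).
  by apply: eq_bigr => j _; rewrite [\adj A j i]mxE.
rewrite mul_mx_adj (bigD1 i) //= big1 ?addr0; first by rewrite mxE eqxx mulr1n.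
by move=> l li; rewrite mxE (negbTE li) mulr0n mulr0.
Qed.

End DetRowLinComb.

Section Jacobian.
Variables (R : comNzRingType) (n : nat).
Implicit Types (f g : n.-tuple {mpoly R[n]}) (i : 'I_n) (P : {mpoly R[n]}).

Lemma jacobian_mx_comp f g :
  jacobian_mx [tuple tnth f a \mPo g | a < n]
  = map_mx (comp_mpoly g) (jacobian_mx f) *m jacobian_mx g.
Proof.
apply/matrixP => a b; rewrite !mxE tnth_mktuple mderiv_comp_mpoly.
by apply: eq_bigr => l _; rewrite !mxE.
Qed.

Lemma jacobian_mx_id : jacobian_mx [tuple 'X_i : {mpoly R[n]} | i < n] = 1%:M.
Proof. by apply/matrixP => a b; rewrite !mxE tnth_mktuple mderivXU. Qed.

Lemma jac_comp f g :
  jac [tuple tnth f a \mPo g | a < n] = (jac f \mPo g) * jac g.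
Proof. by rewrite /jac jacobian_mx_comp det_mulmx det_map_mx. Qed.

Lemma jac_inverse f g :
  (forall a, tnth f a \mPo g = 'X_a) -> (jac f \mPo g) * jac g = 1.
Proof.
move=> fg; rewrite -jac_comp /jac -(det1 _ n); congr (\det _).
by rewrite -jacobian_mx_id; congr (jacobian_mx _); apply: eq_mktuple.
Qed.

Lemma Delta_comp g i P : Delta g i (P \mPo g) = (P^`M(i) \mPo g) * jac g.
Proof.
apply: (det_row_lincomb (cc := fun l => P^`M(l) \mPo g)).
- by move=> r c ri; rewrite !mxE tnth_mktuple (negbTE ri).
- move=> c; rewrite !mxE tnth_mktuple eqxx mderiv_comp_mpoly.
  by apply: eq_bigr => l _; rewrite mxE.
Qed.

End Jacobian.

Section JacobianField.
Variables (K : fieldType) (n : nat) (lambda : K).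
Hypothesis lambda_neq0 : lambda != 0.
Implicit Types (f g : n.-tuple {mpoly K[n]}) (i : 'I_n) (P : {mpoly K[n]}).

Lemma jac_inverse_const f g :
  (forall a, tnth f a \mPo g = 'X_a) -> jac f = lambda%:MP -> jac g = lambda^-1%:MP.
Proof.
move=> fg jacf; have := jac_inverse fg; rewrite jacf comp_mpolyC => jacg.
have : lambda^-1%:MP * (lambda%:MP * jac g) = lambda^-1%:MP by rewrite jacg mulr1.
by rewrite mulrA -mpolyCM mulVf // mpolyC1 mul1r.
Qed.

Lemma Delta_comp_delta g i P :
  jac g = lambda^-1%:MP -> Delta g i (P \mPo g) = delta lambda i P \mPo g.
Proof.
by move=> jacg; rewrite Delta_comp jacg /delta comp_mpolyZ -mul_mpolyC mulrC.
Qed.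

Lemma iter_delta i m P :
  iter m (delta lambda i) P = lambda^-1 ^+ m *: iter m (mderiv i) P.
Proof.
elim: m => [|m IHm] /=; first by rewrite scale1r.
by rewrite IHm /delta mderivZ scalerA exprS.
Qed.

Lemma locally_nilpotent_delta i : locally_nilpotent (delta lambda i).
Proof.
by move=> P; exists (msize P); rewrite iter_delta iter_mderiv_msize scaler0.
Qed.

End JacobianField.

Lemma locally_nilpotent_conj (T U : nmodType) (D : T -> T) (E : U -> U)
    (phi : T -> U) (psi : U -> T) :
  phi 0 = 0 -> cancel psi phi -> (forall x, E (phi x) = phi (D x)) ->
  locally_nilpotent D -> locally_nilpotent E.
Proof.
move=> phi0 psiK ED nilD y; have [m Dm] := nilD (psi y); exists m.
have iterED k x : iter k E (phi x) = phi (iter k D x).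
  by elim: k => //= k ->; apply: ED.
by rewrite -[y]psiK iterED Dm phi0.
Qed.

Theorem lemma4 (K : closedFieldType) (charK0 : [pchar K] =i pred0) (n : nat)
  (f g : n.-tuple {mpoly K[n]}) (lambda : K)
  (hinv : poly_inverse f g)
  (hlam : lambda != 0) (hjac : jac f = lambda%:MP) :
  (forall (i : 'I_n) (P : {mpoly K[n]}),
     Delta g i (P \mPo g) = delta lambda i P \mPo g /\
     Delta g i P \mPo f = delta lambda i (P \mPo f)) /\
  (forall i : 'I_n, locally_nilpotent (Delta g i)).
Proof.
have [fg gf] := hinv.
have jacg := jac_inverse_const hlam fg hjac.
have Delta_g i P : Delta g i (P \mPo g) = delta lambda i P \mPo g.
  exact: Delta_comp_delta.
split=> [i P | i]; first split => //.
  by rewrite -{1}[P](comp_mpolyK fg) Delta_g (comp_mpolyK gf).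
apply: (locally_nilpotent_conj (comp_mpoly0 g) (comp_mpolyK fg) (Delta_g i)).
exact: locally_nilpotent_delta.
Qed.
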